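(* For every list (any length, any initial order) and every request sequence $\sigma$, in the full cost model, $$\min\{\mathrm{TS}(\sigma),\mathrm{MTFO}(\sigma),\mathrm{MTFE}(\sigma)\}\le \tfrac{5}{3}\,\mathrm{OPT}(\sigma).$$ Consequently, a deterministic online algorithm that receives two advice bits indicating which of TS, MTFO, MTFE has the smallest cost on $\sigma$ and then runs it has cost at most $\frac53\mathrm{OPT}(\sigma)$ on every $\sigma$.
   Context: Static list update problem: a list of $l$ distinct items in some initial order; a request sequence $\sigma$ is served in order. Serving a request to the item at position $i$ (positions $1,\dots,l$ from the front) costs $i$ (full cost model). Immediately after an access, the accessed item may be moved closer to the front at no cost (free exchange); at any time two adjacent items may be swapped at cost $1$ (paid exchange). $A(\sigma)$ is the total cost of algorithm $A$ on $\sigma$; $\mathrm{OPT}(\sigma)$ is the minimum cost of any offline algorithm on $\sigma$; all algorithms start from the same initial list. MTFO (Move-To-Front-Odd) moves a requested item to the front (by a free exchange) on the 1st, 3rd, 5th, ... request to that item, and otherwise leaves it in place. MTFE (Move-To-Front-Even) moves a requested item to the front on the 2nd, 4th, 6th, ... request to that item, and otherwise leaves it in place. TS (Timestamp): on a request to item $x$, if $x$ has been requested before and some item preceding $x$ in the list has been requested at most once since the previous request to $x$, then $x$ is moved (free exchange) to immediately in front of the frontmost such item; otherwise no item is moved. None of these algorithms makes paid exchanges. *)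

From mathcomp Require Import all_boot.
Set Implicit Arguments. Unset Strict Implicit. Unset Printing Implicit Defensive.

Section ListUpdate.
Variable T : eqType.

(* Positions are 1-based: item x in list s is at position (index x s).+1. *)
Definition pos (x : T) (s : seq T) : nat := (index x s).+1.

(* paid exchange: swap the items at 0-based positions i and i+1
   (no-op if out of range; it is still charged 1, which never helps). *)
Definition swap_adj (i : nat) (s : seq T) : seq T :=
  take i s ++ (match drop i s with a :: b :: r => b :: a :: r | r => r end).

Definition insert_at (j : nat) (x : T) (s : seq T) : seq T :=
  take j s ++ x :: drop j s.

(* free exchange: move x to 0-based position j, but never backwards
   (only closer to the front; j larger than current index = no move). *)
Definition move_to (j : nat) (x : T) (s : seq T) : seq T :=
  insert_at (minn j (index x s)) x (rem x s).

(* An online algorithm without paid exchanges: given the history of previous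
   requests, the current list and the current request, returns the new list. *)
Definition step := seq T -> seq T -> T -> seq T.

Fixpoint run (alg : step) (h : seq T) (s : seq T) (sigma : seq T) : nat :=
  match sigma with
  | [::] => 0
  | x :: sigma' => pos x s + run alg (rcons h x) (alg h s x) sigma'
  end.

Definition mtfo_step : step := fun h s x =>
  if odd (count_mem x h).+1 then move_to 0 x s else s.

Definition mtfe_step : step := fun h s x =>
  if ~~ odd (count_mem x h).+1 then move_to 0 x s else s.

(* TS (Timestamp). since = requests strictly after the previous request to x
   (reversed; order is irrelevant for counting). *)
Definition ts_step : step := fun h s x =>
  if x \in h then
    let since := take (index x (rev h)) (rev h) in
    let j := find (fun y => count_mem y since <= 1) (take (index x s) s) in
    if j < index x s then move_to j x s else s
  else s.

Definition TS (s sigma : seq T) := run ts_step [::] s sigma.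
Definition MTFO (s sigma : seq T) := run mtfo_step [::] s sigma.
Definition MTFE (s sigma : seq T) := run mtfe_step [::] s sigma.

(* An arbitrary offline algorithm: for each request, a sequence of paid
   adjacent exchanges performed before serving it (cost 1 each), then the
   access (cost = position), then a free exchange moving the accessed item
   to 0-based position j (closer to the front). Paid exchanges "at any time"
   can all be moved to just before the next request. Missing schedule
   entries default to "no exchanges". *)
Definition sched := seq (seq nat * nat).

Fixpoint offline_cost (s : seq T) (sigma : seq T) (S : sched) : nat :=
  match sigma with
  | [::] => 0
  | x :: sigma' =>
      let st := head ([::], size s) S in
      let s1 := foldl (fun l i => swap_adj i l) s st.1 in
      size st.1 + pos x s1 + offline_cost (move_to st.2 x s1) sigma' (behead S)
  end.

Definition advice (s sigma : seq T) : bool * bool :=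
  if TS s sigma <= minn (MTFO s sigma) (MTFE s sigma) then (false, false)
  else if MTFO s sigma <= MTFE s sigma then (false, true) else (true, false).

Definition alg_of_advice (b : bool * bool) : step :=
  match b with
  | (false, false) => ts_step
  | (false, true) => mtfo_step
  | _ => mtfe_step
  end.

End ListUpdate.

From mathcomp Require Import all_boot zify.
Set Implicit Arguments. Unset Strict Implicit. Unset Printing Implicit Defensive.

(* We prove the stronger amortized bound TS + MTFO + MTFE <= 5 OPT with a
   potential function over ordered pairs (a, b) of distinct items.  The state
   of a pair records which of a, b is in front in each of the four lists, the
   two TS counters of the pair (requests to one item since the last request to
   the other, capped at 2) and the parities of the numbers of requests to a
   and b.  The pair potential [phi] is a table over these 576 states whose
   three amortized inequalities (a paid exchange by OPT, a request to a, a
   request to b) are checked by evaluation in [phi_certificate]. *)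

Section ListOrder.
Variable T : eqType.
Implicit Types (s r : seq T) (x y z u v : T).

Definition bef s u v : bool := index u s < index v s.

Lemma bef_irr s u : bef s u u = false.
Proof. by rewrite /bef ltnn. Qed.

Lemma bef_mem s u v : bef s u v -> u \in s.
Proof. by rewrite /bef -index_mem => /leq_trans; apply; rewrite index_size. Qed.

Lemma index_neq s y z : y \in s -> y != z -> index y s != index z s.
Proof.
move=> ys; apply: contra => /eqP E.
have zs : z \in s by rewrite -index_mem -E index_mem.
by rewrite (index_inj y ys zs E).
Qed.

Lemma bef_asym s u v : u \in s -> v \in s -> u != v -> bef s v u = ~~ bef s u v.
Proof.
move=> us vs uv; have := index_neq us uv.
by rewrite /bef -leqNgt ltn_neqAle eq_sym => ->.
Qed.

Lemma index_count s x : uniq s -> x \in s -> index x s = count (bef s ^~ x) s.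
Proof.
elim: s => //= a s IH /andP [an us]; rewrite in_cons => xin.
rewrite /bef /=; have [ax | nax] := eqVneq a x.
  rewrite ax eqxx add0n; apply/esym/eqP; rewrite -leqn0 leqNgt -has_count.
  by apply/hasPn.
rewrite eqxx add1n {1}(IH us); last by move: xin; rewrite eq_sym (negbTE nax).
congr _.+1; apply: eq_in_count => y ys /=.
by have -> : (a == y) = false by apply: contraNF an => /eqP ->.
Qed.

Lemma index_insert_at k x r y : y \in r -> y != x ->
  index y (insert_at k x r) = index y r + (k <= index y r).
Proof.
rewrite /insert_at; elim: r k => [|a r IH] [|k] //=; rewrite in_cons => yin yx.
  by rewrite (eq_sym x) (negbTE yx) addn1.
have [// | ay] := eqVneq a y.
have yr : y \in r by move: yin; rewrite eq_sym (negbTE ay).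
by rewrite IH // ltnS addSn.
Qed.

Lemma index_insert_at_self k x r : x \notin r ->
  index x (insert_at k x r) = minn k (size r).
Proof.
rewrite /insert_at; elim: r k => [|a r IH] [|k] //=; rewrite ?eqxx // in_cons negb_or.
by case/andP=> xa xr; rewrite eq_sym (negbTE xa) IH // minnSS.
Qed.

Lemma index_rem s x y : uniq s -> x \in s -> y \in s -> y != x ->
  index y (rem x s) = index y s - (index x s < index y s).
Proof.
elim: s => //= a s IH /andP [an us]; rewrite !in_cons => xin yin yx.
have [ax | ax] := eqVneq a x.
  by subst a; rewrite eq_sym (negbTE yx) subn1.
rewrite /=; have [// | ay] := eqVneq a y.
have ys : y \in s by move: yin; rewrite eq_sym (negbTE ay).
have xs : x \in s by move: xin; rewrite eq_sym (negbTE ax).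
rewrite IH // ltnS.
case: ltnP => [lt | _]; rewrite /= ?subn0 // !subn1 prednK //.
exact: leq_ltn_trans (leq0n _) lt.
Qed.

Lemma perm_move_to j x s : x \in s -> perm_eq (move_to j x s) s.
Proof.
move=> xs; rewrite /move_to /insert_at perm_sym (perm_trans (perm_to_rem xs)) //.
by rewrite -[x :: _]/([:: x] ++ _) -{1}(cat_take_drop (minn j (index x s)) (rem x s)) perm_catCA.
Qed.

Lemma index_move_to_self j x s : uniq s -> x \in s ->
  index x (move_to j x s) = minn j (index x s).
Proof.
move=> us xs; rewrite /move_to index_insert_at_self ?mem_rem_uniqF // size_rem //.
by have := index_mem x s; rewrite xs; lia.
Qed.

(* Moving the item at position ix to position k <= ix sends an item at position
   i != ix to position [shift k ix i]. *)
Definition shift (k ix i : nat) : nat := i + (k <= i < ix).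

Lemma shift_mono k ix i i' : k <= ix -> i != ix -> i' != ix -> i != i' ->
  (shift k ix i < shift k ix i') = (i < i').
Proof.
rewrite /shift => *.
by case: (leqP k i); case: (leqP k i'); case: (ltnP i ix); case: (ltnP i' ix) => /= *; lia.
Qed.

Lemma shift_front k ix i : k <= ix -> i != ix -> (k < shift k ix i) = (ix < i) || (k <= i).
Proof. by rewrite /shift => *; case: (leqP k i); case: (ltnP i ix) => /= *; lia. Qed.

Lemma index_move_to j x s y : uniq s -> x \in s -> y \in s -> y != x ->
  index y (move_to j x s) = shift (minn j (index x s)) (index x s) (index y s).
Proof.
move=> us xs ys yx; have := index_neq ys yx; have := geq_minr j (index x s).
have yr : y \in rem x s by rewrite mem_rem_uniq // inE yx.
rewrite /move_to /shift index_insert_at // index_rem //.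
move: (index y s) (index x s) (minn j _) => iy ix k kx ne.
case: (ltngtP ix iy) => [lt|lt|eq]; last by rewrite eq eqxx in ne.
  rewrite /= andbF addn0; have -> : k <= iy - 1 by lia.
  by rewrite addn1 subn1 prednK //; lia.
by rewrite /= subn0 andbT.
Qed.

Lemma bef_move_to j x s y z : uniq s -> x \in s -> y \in s -> z \in s ->
  y != x -> z != x -> bef (move_to j x s) y z = bef s y z.
Proof.
move=> us xs ys zs yx zx; rewrite /bef !index_move_to //.
have [-> | yz] := eqVneq y z; first by rewrite !ltnn.
by rewrite shift_mono ?geq_minr ?index_neq.
Qed.

Lemma bef_move_to_self j x s y : uniq s -> x \in s -> y \in s -> y != x ->
  bef (move_to j x s) x y = bef s x y || (minn j (index x s) <= index y s).
Proof.
move=> us xs ys yx.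
by rewrite /bef index_move_to_self ?index_move_to ?shift_front ?geq_minr ?index_neq.
Qed.

Lemma move_to_id x s : x \in s -> move_to (index x s) x s = s.
Proof.
move=> xs; rewrite /move_to minnn remE /insert_at.
have lt_xs : index x s < size s by rewrite index_mem.
have sz : size (take (index x s) s) = index x s by rewrite size_takel // ltnW.
rewrite -{1}sz take_size_cat // -{1}sz drop_size_cat //.
have -> : x :: drop (index x s).+1 s = drop (index x s) s.
  by rewrite (drop_nth x lt_xs) nth_index.
by rewrite sz cat_take_drop.
Qed.

Definition moves x s s' : Prop := exists j, s' = move_to j x s.

Lemma perm_moves x s s' : x \in s -> moves x s s' -> perm_eq s' s.
Proof. by move=> xs [j ->]; apply: perm_move_to. Qed.

Lemma rem_cat_notin x s r : x \notin s -> rem x (s ++ r) = s ++ rem x r.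
Proof.
elim: s => //= a s IH; rewrite in_cons negb_or => /andP [xa xs].
by rewrite eq_sym (negbTE xa) IH.
Qed.

Lemma swap_adjP i s : uniq s -> swap_adj i s = s \/
  exists a b, [/\ index a s = i, index b s = i.+1, b \in s & swap_adj i s = move_to i b s].
Proof.
move=> us; rewrite /swap_adj; case E: (drop i s) => [|a [|b r]];
  try by left; rewrite -E cat_take_drop.
right; exists a, b.
have sz : size (take i s) = i.
  by apply: size_takel; have := size_drop i s; rewrite E /=; lia.
have Es : s = take i s ++ [:: a, b & r] by rewrite -E cat_take_drop.
move: (take i s) sz Es us => P <- -> {E}.
rewrite cat_uniq => /and3P [_ /hasPn Pn /= /andP [] ].
rewrite in_cons negb_or => /andP [ab _] _.
have aP : a \notin P by apply: Pn; rewrite in_cons eqxx.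
have bP : b \notin P by apply: Pn; rewrite !in_cons eqxx orbT.
have ibP : index b (P ++ [:: a, b & r]) = (size P).+1.
  by rewrite index_cat (negbTE bP) /= (negbTE ab) eqxx addn1.
split => //; first by rewrite index_cat (negbTE aP) /= eqxx addn0.
  by rewrite mem_cat !in_cons eqxx !orbT.
rewrite /move_to ibP (minn_idPl (leqnSn _)) rem_cat_notin //= (negbTE ab) eqxx.
by rewrite /insert_at take_size_cat ?drop_size_cat.
Qed.

Lemma perm_swap_adj i s : uniq s -> perm_eq (swap_adj i s) s.
Proof.
move=> us; have [-> // | [a [b [_ _ bs ->]]]] := swap_adjP i us.
exact: perm_move_to.
Qed.

Lemma bef_swap_adj i s : uniq s -> swap_adj i s = s \/ exists a b,
  forall u v, u \in s -> v \in s -> bef (swap_adj i s) u v != bef s u v ->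
    (u == a) && (v == b) || (u == b) && (v == a).
Proof.
move=> us; have [-> | [a [b [ia ib bs ->]]]] := swap_adjP i us; [by left | right].
have changed_b v : v \in s -> v != b ->
    bef (move_to i b s) b v != bef s b v -> v == a.
  move=> vs vb; rewrite bef_move_to_self // ib (minn_idPl (leqnSn _)) /bef ib.
  case: ltnP => //= v_le; case: leqP => // i_v _.
  have iv : index v s = index a s by have := index_neq vs vb; rewrite ib ia; lia.
  have a_s : a \in s by rewrite -index_mem ia; apply: ltnW; rewrite -ib index_mem.
  by rewrite (index_inj v vs a_s iv).
exists a, b => u v us' vs; have [-> | ub] := eqVneq u b.
  have [-> | vb] := eqVneq v b; first by rewrite !bef_irr.
  by move/(changed_b v vs vb)/eqP ->; rewrite !eqxx orbT.
have [-> | vb] := eqVneq v b.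
  have mb := perm_mem (perm_move_to i bs); have bu : b != u by rewrite eq_sym.
  rewrite (bef_asym bs us' bu) (@bef_asym (move_to i b s)) ?mb //.
  rewrite (inj_eq negb_inj).
  by move/(changed_b u us' ub)/eqP ->; rewrite !eqxx.
by rewrite bef_move_to // eqxx.
Qed.
End ListOrder.


Section Timestamp.
Variable T : eqType.
Implicit Types (h s : seq T) (x y w : T).

Definition since h x : seq T := take (index x (rev h)) (rev h).

Definition ts_count h x y : nat :=
  if x \in h then minn (count_mem y (since h x)) 2 else 2.

Lemma ts_count_le2 h x y : ts_count h x y <= 2.
Proof. by rewrite /ts_count; case: ifP => _ //; rewrite geq_minr. Qed.

Lemma ts_count_le1 h x y :
  (ts_count h x y <= 1) = (x \in h) && (count_mem y (since h x) <= 1).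
Proof. by rewrite /ts_count; case: (x \in h) => //=; rewrite geq_min orbF. Qed.

(* The length of the history up to (and including) the last request to x. *)
Definition last_req h x : nat := size h - index x (rev h).

Lemma count_since h x y : count_mem y (since h x) = count_mem y (drop (last_req h x) h).
Proof. by rewrite /since take_rev count_rev. Qed.

Lemma mem_drop_last_req h x k : (x \in drop k h) = (x \in h) && (k < last_req h x).
Proof.
rewrite -mem_rev rev_drop /last_req; case xh: (x \in h); last first.
  by apply/negbTE; apply: contraFN xh => /mem_take; rewrite mem_rev.
have := index_mem x (rev h); rewrite mem_rev xh size_rev in_take ?mem_rev //.
by move=> lt; apply/idP/idP; lia.
Qed.

Lemma count_drop_mono (p : pred T) h k m : k <= m -> count p (drop m h) <= count p (drop k h).
Proof.
move=> km; rewrite -(subnK km) -drop_drop.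
by rewrite -{2}(cat_take_drop (m - k) (drop k h)) count_cat leq_addl.
Qed.

Lemma count_since_le_drop h x y k : x \in drop k h ->
  count_mem y (since h x) <= count_mem y (drop k h).
Proof.
by rewrite mem_drop_last_req count_since => /andP [_ /ltnW]; apply: count_drop_mono.
Qed.

Lemma count_drop_le_since h x y k : x \in h -> x \notin drop k h ->
  count_mem y (drop k h) <= count_mem y (since h x).
Proof.
by move=> xh; rewrite mem_drop_last_req xh /= -leqNgt count_since; apply: count_drop_mono.
Qed.

Lemma count_mem_rcons h x y : count_mem y (rcons h x) = count_mem y h + (x == y).
Proof. by rewrite -cats1 count_cat /= addn0. Qed.

Lemma since_rcons h x u : since (rcons h x) u = if x == u then [::] else x :: since h u.
Proof. by rewrite /since rev_rcons /=; case: (x == u). Qed.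

Lemma ts_count_self h x y : ts_count (rcons h x) x y = 0.
Proof. by rewrite /ts_count mem_rcons in_cons eqxx /= since_rcons eqxx. Qed.

Lemma ts_count_other h x y : x != y -> ts_count (rcons h x) y x = minn (ts_count h y x).+1 2.
Proof.
move=> xy; rewrite /ts_count mem_rcons in_cons eq_sym (negbTE xy) since_rcons (negbTE xy) /=.
by case: (y \in h) => //=; rewrite eqxx add1n; case: (count_mem x _) => [|[|n]].
Qed.

Lemma ts_count_none h x y z : x != y -> x != z -> ts_count (rcons h x) y z = ts_count h y z.
Proof.
move=> xy xz; rewrite /ts_count mem_rcons in_cons eq_sym (negbTE xy) since_rcons (negbTE xy) /=.
by rewrite (negbTE xz).
Qed.

Definition ts_inv h s : Prop := forall w y k, y \in s -> bef s w y ->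
  2 <= count_mem y (drop k h) -> 2 <= count_mem w (drop k h).

Lemma ts_inv_nil s : ts_inv [::] s.
Proof. by move=> w y k _ _; rewrite drop_oversize. Qed.

Lemma ts_inv_since h s x w y : ts_inv h s -> y \in s -> bef s w y ->
  2 <= count_mem y (since h x) -> 2 <= count_mem w (since h x).
Proof. by rewrite !count_since => inv; apply: inv. Qed.

Definition ts_target h s x : nat :=
  find (fun y => count_mem y (since h x) <= 1) (take (index x s) s).

Lemma ts_stepE h s x : ts_step h s x =
  if (x \in h) && (ts_target h s x < index x s) then move_to (ts_target h s x) x s else s.
Proof. by rewrite /ts_step; case: (x \in h). Qed.

(* Under the invariant, the items in front of x requested at least twice since
   the last request to x form a prefix of the list, ending before ts_target. *)
Lemma ts_target_spec h s x y : ts_inv h s -> uniq s -> y \in s -> index y s < index x s ->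
  (ts_target h s x <= index y s) = (count_mem y (since h x) <= 1).
Proof.
move=> inv us ys lt_yx; have ys_lt : index y s < size s by rewrite index_mem.
rewrite /ts_target; set p := fun y0 : T => count_mem y0 (since h x) <= 1.
set j := find p _.
apply/idP/idP => [target_le | py]; last first.
  rewrite leqNgt; apply/negP => /(before_find y).
  by rewrite nth_take // nth_index // /p py.
have hasp : has p (take (index x s) s).
  by rewrite has_find size_takel ?index_size //; lia.
have := nth_find y hasp; rewrite nth_take; last by apply: leq_ltn_trans lt_yx.
set w := nth y s _ => pw.
have w_idx : index w s = j by rewrite index_uniq //; lia.
move: target_le; rewrite leq_eqVlt => /orP [/eqP eq_idx | lt_wy].
  by move: pw; rewrite /w -/j eq_idx nth_index.
rewrite leqNgt; apply/negP => two_y.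
by move: pw; rewrite /p leqNgt (ts_inv_since inv ys _ two_y) // /bef w_idx.
Qed.

Lemma ts_step_bef h s x y : ts_inv h s -> uniq s -> x \in s -> y \in s -> y != x ->
  bef (ts_step h s x) x y = bef s x y || (ts_count h x y <= 1).
Proof.
move=> inv us xs ys yx.
rewrite ts_count_le1 ts_stepE; case: (boolP (x \in h)) => xh /=; last by rewrite orbF.
have [x_y | y_x] := boolP (bef s x y).
  by case: ifP => // _; rewrite bef_move_to_self // x_y.
have lt_yx : index y s < index x s.
  by have := index_neq ys yx; move: y_x; rewrite /bef; lia.
rewrite -(ts_target_spec inv us ys lt_yx); case: ifP => [lt_t | /negbT].
  by rewrite bef_move_to_self // (minn_idPl (ltnW lt_t)) (negbTE y_x).
rewrite (negbTE y_x) -leqNgt => le_t; apply/esym/negbTE.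
by rewrite -ltnNge (leq_trans lt_yx).
Qed.

Lemma ts_step_move h s x : x \in s -> moves x s (ts_step h s x).
Proof.
move=> xs; rewrite ts_stepE; case: ifP => _; first by exists (ts_target h s x).
by exists (index x s); rewrite move_to_id.
Qed.

Lemma ts_inv_step h s x : uniq s -> x \in s -> ts_inv h s ->
  ts_inv (rcons h x) (ts_step h s x).
Proof.
move=> us xs inv w y k; have [j Es] := ts_step_move h xs.
have mem' : ts_step h s x =i s by rewrite Es; apply: perm_mem; apply: perm_move_to.
rewrite mem' => ys bwy; have ws : w \in s by rewrite -mem'; apply: bef_mem bwy.
case: (leqP k (size h)) => kh; last by rewrite drop_oversize // size_rcons.
rewrite drop_rcons // !count_mem_rcons; set t := drop k h.
have [wx | wx] := eqVneq w x; have [yx | yx] := eqVneq y x.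
- by move: bwy; rewrite wx yx bef_irr.
- (* x got in front of y, so x was requested since the requests to y *)
  subst w; rewrite /= addn0 addn1 ltnS => two_y.
  rewrite -has_count has_pred1; apply/negPn/negP => xt.
  move: bwy; rewrite ts_step_bef // ts_count_le1 => /orP [x_y | /andP [xh le_y]].
    by have := inv x y k ys x_y two_y; rewrite -/t (count_memPn xt).
  by have := leq_trans (count_drop_le_since y xh xt) le_y; rewrite leqNgt two_y.
- (* y = x was requested in t, and w stayed in front of x *)
  subst y; rewrite /= addn0 addn1 ltnS.
  rewrite -has_count has_pred1 => xt; have xh : x \in h by apply: mem_drop xt.
  have xw : x != w by rewrite eq_sym.
  move: bwy; rewrite (bef_asym _ _ xw) ?mem' // ts_step_bef // ts_count_le1 xh.
  rewrite negb_or => /andP [_]; rewrite -ltnNge => two_w.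
  exact: leq_trans two_w (count_since_le_drop w xt).
- rewrite /= !addn0 => two_y; apply: (inv w y k ys) => //.
  by rewrite -(bef_move_to j us xs ws ys wx yx) -Es.
Qed.
End Timestamp.

(* The state of an ordered pair (a, b) of distinct items
   consists of four booleans telling whether a is in front of b in the lists of
   TS, MTFO, MTFE and OPT, the TS counters sa = [ts_count h a b] and
   sb = [ts_count h b a] (values 0, 1, 2), and the parities pa, pb of the
   numbers of requests to a and b so far.  [phi_tbl] lists the potential of the
   576 states; each line is one choice of the four booleans. *)
Definition phi_tbl : seq nat := [::
  1; 1; 1; 1; 1; 2; 2; 1; 1; 2; 2; 1; 0; 1; 1; 0; 1; 2; 2; 1; 1; 2; 2; 1; 0; 0; 0; 0; 0; 0; 0; 0; 0; 0; 0; 0;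
  4; 4; 4; 4; 4; 4; 4; 4; 4; 4; 4; 4; 4; 4; 4; 4; 4; 4; 4; 4; 4; 4; 4; 4; 5; 5; 5; 5; 5; 5; 5; 5; 5; 5; 5; 5;
  2; 1; 2; 2; 2; 2; 2; 2; 2; 2; 2; 2; 2; 1; 2; 1; 2; 2; 2; 1; 2; 2; 2; 1; 2; 1; 2; 1; 2; 1; 2; 1; 2; 1; 2; 1;
  3; 2; 3; 3; 2; 2; 3; 3; 2; 2; 3; 3; 3; 2; 3; 3; 2; 2; 3; 3; 2; 2; 3; 3; 3; 3; 4; 4; 3; 3; 4; 4; 3; 3; 4; 4;
  2; 2; 1; 2; 2; 2; 2; 2; 2; 2; 2; 2; 1; 2; 1; 2; 1; 2; 2; 2; 1; 2; 2; 2; 1; 2; 1; 2; 1; 2; 1; 2; 1; 2; 1; 2;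
  3; 3; 2; 3; 3; 3; 2; 2; 3; 3; 2; 2; 3; 3; 2; 3; 3; 3; 2; 2; 3; 3; 2; 2; 4; 4; 3; 3; 4; 4; 3; 3; 4; 4; 3; 3;
  3; 3; 3; 3; 3; 3; 3; 3; 3; 3; 3; 3; 3; 3; 3; 3; 3; 3; 3; 3; 3; 3; 3; 3; 3; 3; 3; 3; 3; 3; 3; 3; 3; 3; 3; 3;
  2; 1; 1; 2; 1; 1; 1; 1; 1; 1; 1; 1; 2; 1; 1; 2; 1; 1; 1; 1; 1; 1; 1; 1; 2; 2; 2; 2; 2; 2; 2; 2; 2; 2; 2; 2;
  2; 1; 1; 2; 2; 1; 1; 2; 2; 2; 2; 2; 1; 1; 1; 1; 1; 1; 1; 1; 2; 2; 2; 2; 1; 1; 1; 1; 1; 1; 1; 1; 2; 2; 2; 2;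
  3; 3; 3; 3; 3; 3; 3; 3; 3; 3; 3; 3; 3; 3; 3; 3; 3; 3; 3; 3; 3; 3; 3; 3; 3; 3; 3; 3; 3; 3; 3; 3; 3; 3; 3; 3;
  3; 2; 3; 3; 3; 2; 3; 3; 4; 3; 4; 3; 3; 2; 3; 2; 3; 2; 3; 2; 4; 3; 4; 3; 3; 2; 3; 2; 3; 2; 3; 2; 4; 3; 4; 3;
  2; 1; 2; 2; 1; 1; 2; 2; 1; 1; 2; 2; 2; 2; 2; 2; 1; 2; 2; 2; 1; 1; 2; 2; 2; 2; 2; 2; 1; 2; 2; 2; 1; 1; 2; 2;
  3; 3; 2; 3; 3; 3; 2; 3; 3; 4; 3; 4; 2; 3; 2; 3; 2; 3; 2; 3; 3; 4; 3; 4; 2; 3; 2; 3; 2; 3; 2; 3; 3; 4; 3; 4;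
  2; 2; 1; 2; 2; 2; 1; 1; 2; 2; 1; 1; 2; 2; 2; 2; 2; 2; 2; 1; 2; 2; 1; 1; 2; 2; 2; 2; 2; 2; 2; 1; 2; 2; 1; 1;
  4; 4; 4; 4; 4; 4; 4; 4; 5; 5; 5; 5; 4; 4; 4; 4; 4; 4; 4; 4; 5; 5; 5; 5; 4; 4; 4; 4; 4; 4; 4; 4; 5; 5; 5; 5;
  1; 1; 1; 1; 0; 1; 1; 0; 0; 0; 0; 0; 1; 2; 2; 1; 1; 2; 2; 1; 0; 0; 0; 0; 1; 2; 2; 1; 1; 2; 2; 1; 0; 0; 0; 0].

Definition phi_index (oT oO oE oP : bool) (sa sb : nat) (pa pb : bool) : nat :=
  ((((((oT * 2 + oO) * 2 + oE) * 2 + oP) * 3 + sa) * 3 + sb) * 2 + pa) * 2 + pb.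

Definition phi (oT oO oE oP : bool) (sa sb : nat) (pa pb : bool) : nat :=
  nth 0 phi_tbl (phi_index oT oO oE oP sa sb pa pb).

Definition bools : seq bool := [:: true; false].

(* The three amortized inequalities satisfied by phi in a given state:
   - OPT reversing the pair by a paid exchange raises phi by at most 5;
   - a request to a (which costs each algorithm 1 iff b is in front of a, and
     after which OPT may or may not have a in front, as chosen by c);
   - a request to b, symmetrically.
   After a request to a, TS has a in front iff it had, or [ts_count h a b <= 1];
   MTFO moves a to the front on odd-numbered requests, MTFE on even ones. *)
Definition phi_ok (oT oO oE oP : bool) (sa sb : nat) (pa pb : bool) : bool :=
  [&& phi oT oO oE (~~ oP) sa sb pa pb <= phi oT oO oE oP sa sb pa pb + 5,
   all (fun c => (~~ oT) + (~~ oO) + (~~ oE) +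
       phi (oT || (sa <= 1)) (oO || ~~ pa) (oE || pa) (oP || c) 0 (minn sb.+1 2) (~~ pa) pb
     <= 5 * (~~ oP) + phi oT oO oE oP sa sb pa pb) bools &
   all (fun c => oT + oO + oE +
       phi (oT && ~~ (sb <= 1)) (oO && pb) (oE && ~~ pb) (oP && c) (minn sa.+1 2) 0 pa (~~ pb)
     <= 5 * oP + phi oT oO oE oP sa sb pa pb) bools].

Lemma phi_certificate (oT oO oE oP : bool) (sa sb : nat) (pa pb : bool) :
  sa <= 2 -> sb <= 2 -> phi_ok oT oO oE oP sa sb pa pb.
Proof.
have mem_bool (b : bool) : b \in bools by case: b.
have mem_iota3 n : n <= 2 -> n \in iota 0 3 by rewrite mem_iota.
have all_ok : all (fun oT => all (fun oO => all (fun oE => all (fun oP =>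
    all (fun sa => all (fun sb => all (fun pa => all (fun pb =>
      phi_ok oT oO oE oP sa sb pa pb)
    bools) bools) (iota 0 3)) (iota 0 3)) bools) bools) bools) bools by vm_compute.
move=> /mem_iota3 sa3 /mem_iota3 sb3.
move: all_ok => /allP/(_ oT (mem_bool _))/allP/(_ oO (mem_bool _))/allP/(_ oE (mem_bool _)).
move=> /allP/(_ oP (mem_bool _))/allP/(_ sa sa3)/allP/(_ sb sb3).
by move=> /allP/(_ pa (mem_bool _))/allP/(_ pb (mem_bool _)).
Qed.

Lemma phi_exchange (oT oO oE oP : bool) (sa sb : nat) (pa pb : bool) : sa <= 2 -> sb <= 2 ->
  phi oT oO oE (~~ oP) sa sb pa pb <= phi oT oO oE oP sa sb pa pb + 5.
Proof. by move=> sa2 sb2; case/and3P: (phi_certificate oT oO oE oP pa pb sa2 sb2). Qed.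

Lemma phi_request_first (oT oO oE oP : bool) (sa sb : nat) (pa pb c : bool) :
  sa <= 2 -> sb <= 2 ->
  (~~ oT) + (~~ oO) + (~~ oE) +
    phi (oT || (sa <= 1)) (oO || ~~ pa) (oE || pa) (oP || c) 0 (minn sb.+1 2) (~~ pa) pb
  <= 5 * (~~ oP) + phi oT oO oE oP sa sb pa pb.
Proof.
move=> sa2 sb2; case/and3P: (phi_certificate oT oO oE oP pa pb sa2 sb2) => _ /allP ok _.
by apply: ok; case: c.
Qed.

Lemma phi_request_second (oT oO oE oP : bool) (sa sb : nat) (pa pb c : bool) :
  sa <= 2 -> sb <= 2 ->
  oT + oO + oE +
    phi (oT && ~~ (sb <= 1)) (oO && pb) (oE && ~~ pb) (oP && c) (minn sa.+1 2) 0 pa (~~ pb)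
  <= 5 * oP + phi oT oO oE oP sa sb pa pb.
Proof.
move=> sa2 sb2; case/and3P: (phi_certificate oT oO oE oP pa pb sa2 sb2) => _ _ /allP ok.
by apply: ok; case: c.
Qed.

Lemma phi_init (c : bool) : phi c c c c 2 2 false false = 0.
Proof. by case: c. Qed.

Section MoveToFront.
Variable T : eqType.
Implicit Types (h s : seq T) (x y : T).

Lemma mtfo_step_move h s x : x \in s -> moves x s (mtfo_step h s x).
Proof.
move=> xs; rewrite /mtfo_step; case: ifP => _; first by exists 0.
by exists (index x s); rewrite move_to_id.
Qed.

Lemma mtfe_step_move h s x : x \in s -> moves x s (mtfe_step h s x).
Proof.
move=> xs; rewrite /mtfe_step; case: ifP => _; first by exists 0.
by exists (index x s); rewrite move_to_id.
Qed.

Lemma mtfo_step_bef h s x y : uniq s -> x \in s -> y \in s -> y != x ->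
  bef (mtfo_step h s x) x y = bef s x y || ~~ odd (count_mem x h).
Proof.
move=> us xs ys yx; rewrite /mtfo_step oddS.
by case: ifP => _; rewrite ?orbF // bef_move_to_self // min0n leq0n !orbT.
Qed.

Lemma mtfe_step_bef h s x y : uniq s -> x \in s -> y \in s -> y != x ->
  bef (mtfe_step h s x) x y = bef s x y || odd (count_mem x h).
Proof.
move=> us xs ys yx; rewrite /mtfe_step oddS negbK.
by case: ifP => _; rewrite ?orbF // bef_move_to_self // min0n leq0n !orbT.
Qed.
End MoveToFront.

Section PairPotential.
Variable T : eqType.
Implicit Types (h s : seq T) (x y a b : T).

Definition pair_pot h sT sO sE sP a b : nat :=
  phi (bef sT a b) (bef sO a b) (bef sE a b) (bef sP a b)
      (ts_count h a b) (ts_count h b a) (odd (count_mem a h)) (odd (count_mem b h)).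

(* The part of the cost of accessing x in s charged to the pair (a, b): 1 if x
   is one of them and the other one is in front of it. *)
Definition charge s x a b : nat := (x == a) * bef s b a + (x == b) * bef s a b.

Lemma sum_nat_bool (r : seq T) (p : pred T) : \sum_(a <- r) (p a : nat) = count p r.
Proof. by elim: r => [|a r IH]; rewrite ?big_nil ?big_cons ?IH. Qed.

Lemma sum_pick (r : seq T) x (G : T -> nat) :
  \sum_(a <- r) (x == a) * G a = count_mem x r * G x.
Proof.
elim: r => [|a r IH]; rewrite ?big_nil ?big_cons ?IH //= mulnDl.
by case: (eqVneq x a) => [-> | xa]; rewrite ?eqxx // eq_sym (negbTE xa).
Qed.

Definition psum (L : seq T) (F : T -> T -> nat) : nat :=
  \sum_(a <- L) \sum_(b <- L | a != b) F a b.

Lemma psum_le L F G : (forall a b, a \in L -> b \in L -> a != b -> F a b <= G a b) ->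
  psum L F <= psum L G.
Proof.
move=> le_FG; rewrite /psum big_seq [X in _ <= X]big_seq; apply: leq_sum => a aL.
rewrite big_seq_cond [X in _ <= X]big_seq_cond; apply: leq_sum => b /andP [bL ab].
exact: le_FG.
Qed.

Lemma psumD L F G : psum L (fun a b => F a b + G a b) = psum L F + psum L G.
Proof. by rewrite /psum -big_split; apply: eq_bigr => a _; rewrite big_split. Qed.

Lemma psumMn L k F : psum L (fun a b => k * F a b) = k * psum L F.
Proof. by rewrite /psum big_distrr; apply: eq_bigr => a _; rewrite big_distrr. Qed.

Lemma psum_full L F : (forall a, F a a = 0) ->
  psum L F = \sum_(a <- L) \sum_(b <- L) F a b.
Proof.
move=> F0; apply: eq_bigr => a _; rewrite big_mkcond; apply: eq_bigr => b _.
by case: eqVneq => [-> | _]; rewrite ?F0.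
Qed.

(* Summing the charges of all pairs gives back the access cost (twice, as
   each unordered pair is counted in both orders). *)
Lemma psum_charge L s x : uniq L -> perm_eq s L -> x \in L ->
  psum L (charge s x) = 2 * index x s.
Proof.
move=> uL ps xL; have us : uniq s by rewrite (perm_uniq ps).
have x1 : count_mem x L = 1 by rewrite count_uniq_mem // xL.
rewrite psum_full => [|a]; last by rewrite /charge bef_irr !muln0.
rewrite /charge; under eq_bigr => a _ do rewrite big_split /= -big_distrr.
rewrite big_split /= sum_pick x1 mul1n.
under [X in _ + X]eq_bigr => a _ do rewrite sum_pick x1 mul1n.
rewrite !sum_nat_bool (index_count us) ?(perm_mem ps) //.
by rewrite (permP ps) mul2n addnn.
Qed.

Lemma psum_pair L p q : uniq L -> psum L (fun a b => (a == p) && (b == q)) <= 1.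
Proof.
move=> uL; apply: leq_trans (_ : \sum_(a <- L) \sum_(b <- L) (p == a) * (q == b) <= 1).
  rewrite /psum; apply: leq_sum => a _; rewrite big_mkcond; apply: leq_sum => b _.
  by case: ifP => _; rewrite ?(eq_sym a) ?(eq_sym b) //; case: (p == a); case: (q == b).
under eq_bigr => a _ do rewrite -big_distrr /=.
rewrite sum_pick sum_nat_bool.
have -> : count (eq_op q) L = count_mem q L by apply: eq_count => b; rewrite eq_sym.
by rewrite !count_uniq_mem //; case: (p \in L); case: (q \in L).
Qed.

Definition Phi (L h sT sO sE sP : seq T) : nat := psum L (pair_pot h sT sO sE sP).

Variables (L h sT sO sE sP : seq T).
Hypotheses (uL : uniq L) (pT : perm_eq sT L) (pO : perm_eq sO L) (pE : perm_eq sE L)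
  (pP : perm_eq sP L) (inv : ts_inv h sT).

Lemma uniq_perm_L s : perm_eq s L -> uniq s.
Proof. by move/perm_uniq ->. Qed.

Lemma mem_perm_L s : perm_eq s L -> s =i L.
Proof. exact: perm_mem. Qed.

Lemma bef_perm_asym s a b : perm_eq s L -> a \in L -> b \in L -> a != b ->
  bef s b a = ~~ bef s a b.
Proof. by move=> ps aL bL; apply: bef_asym; rewrite (mem_perm_L ps). Qed.

Lemma perm_steps j x : x \in L ->
  [/\ perm_eq (ts_step h sT x) L, perm_eq (mtfo_step h sO x) L,
      perm_eq (mtfe_step h sE x) L & perm_eq (move_to j x sP) L].
Proof.
move=> xL; have xs s : perm_eq s L -> x \in s by move/mem_perm_L ->.
split; [apply: perm_trans pT | apply: perm_trans pO | apply: perm_trans pE |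
        exact: perm_trans (perm_move_to j (xs _ pP)) pP].
- exact: perm_moves (xs _ pT) (ts_step_move h (xs _ pT)).
- exact: perm_moves (xs _ pO) (mtfo_step_move h (xs _ pO)).
- exact: perm_moves (xs _ pE) (mtfe_step_move h (xs _ pE)).
Qed.

Lemma pair_request_first j a b : a \in L -> b \in L -> a != b ->
  charge sT a a b + charge sO a a b + charge sE a a b +
    pair_pot (rcons h a) (ts_step h sT a) (mtfo_step h sO a) (mtfe_step h sE a)
             (move_to j a sP) a b
  <= 5 * charge sP a a b + pair_pot h sT sO sE sP a b.
Proof.
move=> aL bL ab; have ba : b != a by rewrite eq_sym.
rewrite /charge eqxx (negbTE ab) !mul1n !mul0n !addn0 /pair_pot.
rewrite !(bef_perm_asym _ aL bL ab) //.
rewrite ts_step_bef ?mtfo_step_bef ?mtfe_step_bef ?bef_move_to_self ?uniq_perm_L ?mem_perm_L //.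
rewrite ts_count_self ts_count_other // !count_mem_rcons eqxx (negbTE ab) addn1 addn0 oddS.
exact: phi_request_first (ts_count_le2 h a b) (ts_count_le2 h b a).
Qed.

Lemma pair_request_second j a b : a \in L -> b \in L -> a != b ->
  charge sT b a b + charge sO b a b + charge sE b a b +
    pair_pot (rcons h b) (ts_step h sT b) (mtfo_step h sO b) (mtfe_step h sE b)
             (move_to j b sP) a b
  <= 5 * charge sP b a b + pair_pot h sT sO sE sP a b.
Proof.
move=> aL bL ab; have ba : b != a by rewrite eq_sym.
have [pT' pO' pE' pP'] := perm_steps j bL.
rewrite /charge eqxx (negbTE ba) !mul1n !mul0n !add0n /pair_pot.
rewrite (bef_perm_asym pT' bL aL ba) (bef_perm_asym pO' bL aL ba).
rewrite (bef_perm_asym pE' bL aL ba) (bef_perm_asym pP' bL aL ba).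
rewrite ts_step_bef ?mtfo_step_bef ?mtfe_step_bef ?bef_move_to_self ?uniq_perm_L ?mem_perm_L //.
rewrite !(bef_perm_asym _ aL bL ab) // !negb_or !negbK.
rewrite ts_count_self ts_count_other // !count_mem_rcons eqxx (negbTE ba) addn1 addn0 oddS.
exact: phi_request_second (ts_count_le2 h a b) (ts_count_le2 h b a).
Qed.

Lemma pair_request_other j x a b : x \in L -> a \in L -> b \in L -> x != a -> x != b ->
  charge sT x a b + charge sO x a b + charge sE x a b +
    pair_pot (rcons h x) (ts_step h sT x) (mtfo_step h sO x) (mtfe_step h sE x)
             (move_to j x sP) a b
  <= 5 * charge sP x a b + pair_pot h sT sO sE sP a b.
Proof.
move=> xL aL bL xa xb; have xs s : perm_eq s L -> x \in s by move/mem_perm_L ->.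
have unmoved s k : perm_eq s L -> bef (move_to k x s) a b = bef s a b.
  by move=> ps; rewrite bef_move_to ?uniq_perm_L ?mem_perm_L // eq_sym.
have [jT ->] := ts_step_move h (xs _ pT); have [jO ->] := mtfo_step_move h (xs _ pO).
have [jE ->] := mtfe_step_move h (xs _ pE).
rewrite /charge (negbTE xa) (negbTE xb) !mul0n /pair_pot !ts_count_none // !unmoved //.
by rewrite !count_mem_rcons (negbTE xa) (negbTE xb) !addn0.
Qed.

Lemma Phi_request j x : x \in L ->
  2 * (index x sT + index x sO + index x sE) +
    Phi L (rcons h x) (ts_step h sT x) (mtfo_step h sO x) (mtfe_step h sE x) (move_to j x sP)
  <= 10 * index x sP + Phi L h sT sO sE sP.
Proof.
move=> xL; rewrite !mulnDr -(psum_charge uL pT xL) -(psum_charge uL pO xL).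
rewrite -(psum_charge uL pE xL) (_ : 10 = 5 * 2) // -mulnA -(psum_charge uL pP xL).
rewrite /Phi -!psumD -psumMn -psumD; apply: psum_le => a b aL bL.
have [<- | xa] := eqVneq x a; first exact: pair_request_first.
have [<- | xb] := eqVneq x b; first exact: pair_request_second.
by move=> _; apply: pair_request_other.
Qed.

(* A paid exchange by OPT reverses one pair, raising the potential by at most 10. *)
Lemma Phi_exchange i : Phi L h sT sO sE (swap_adj i sP) <= Phi L h sT sO sE sP + 10.
Proof.
have [-> | [p [q changed]]] := bef_swap_adj i (uniq_perm_L pP); first exact: leq_addr.
pose bump a b := 5 * ((a == p) && (b == q)) + 5 * ((a == q) && (b == p)).
apply: (@leq_trans (psum L (fun a b => pair_pot h sT sO sE sP a b + bump a b))).
  apply: psum_le => a b aL bL ab; rewrite /pair_pot.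
  have [-> | diff] := eqVneq (bef (swap_adj i sP) a b) (bef sP a b); first exact: leq_addr.
  have -> : bef (swap_adj i sP) a b = ~~ bef sP a b.
    by move: diff; case: (bef _ a b); case: (bef sP a b).
  apply: leq_trans (phi_exchange _ _ _ _ _ _ (ts_count_le2 h a b) (ts_count_le2 h b a)) _.
  rewrite leq_add2l /bump; have := changed a b; rewrite !(mem_perm_L pP).
  case/(_ aL bL diff)/orP=> /andP [/eqP -> /eqP ->]; rewrite !eqxx /= muln1.
    exact: leq_addr.
  exact: leq_addl.
rewrite (psumD L (pair_pot h sT sO sE sP) bump) /bump psumD !psumMn leq_add2l.
by rewrite (_ : 10 = 5 * 1 + 5 * 1) // leq_add // leq_mul2l psum_pair.
Qed.
End PairPotential.

Lemma Phi_exchanges (T : eqType) (L h sT sO sE sP : seq T) (l : seq nat) :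
  uniq L -> perm_eq sP L ->
  perm_eq (foldl (fun s i => swap_adj i s) sP l) L /\
  Phi L h sT sO sE (foldl (fun s i => swap_adj i s) sP l) <= Phi L h sT sO sE sP + 10 * size l.
Proof.
move=> uL; elim: l sP => [|i l IH] sP pP /=; first by rewrite muln0 addn0.
have pP' := perm_trans (perm_swap_adj i (uniq_perm_L uL pP)) pP.
have [pP'' le_Phi] := IH _ pP'; split => //.
apply: leq_trans le_Phi _; rewrite mulnS addnA leq_add2r.
exact: Phi_exchange.
Qed.

Lemma amortized_bound (T : eqType) (L sigma : seq T) : uniq L -> all (mem L) sigma ->
  forall h sT sO sE sP S, perm_eq sT L -> perm_eq sO L -> perm_eq sE L -> perm_eq sP L ->
  ts_inv h sT ->
  2 * (run (@ts_step T) h sT sigma + run (@mtfo_step T) h sO sigma + run (@mtfe_step T) h sE sigma)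
    <= 10 * offline_cost sP sigma S + Phi L h sT sO sE sP.
Proof.
move=> uL; elim: sigma => [|x sigma IH] /=; first by move=> *; rewrite addn0.
case/andP=> xL sigmaL h sT sO sE sP S pT pO pE pP inv.
set l := (head _ S).1; set j := (head _ S).2; set s1 := foldl _ sP l.
have [p1 le_swaps] := Phi_exchanges h sT sO sE l uL pP.
have [pT' pO' pE' p1'] := perm_steps h pT pO pE p1 j xL.
have xT : x \in sT by rewrite (mem_perm_L pT).
have inv' := ts_inv_step (uniq_perm_L uL pT) xT inv.
have le_rest := IH sigmaL _ _ _ _ _ (behead S) pT' pO' pE' p1' inv'.
have le_first := Phi_request uL pT pO pE p1 inv j xL.
rewrite -/s1 in le_swaps le_first le_rest; rewrite /pos.
by clear -le_swaps le_first le_rest; lia.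
Qed.

Lemma Phi_init (T : eqType) (L : seq T) : Phi L [::] L L L L = 0.
Proof.
by apply: big1_seq => a _; apply: big1_seq => b _; rewrite /pair_pot /ts_count phi_init.
Qed.

(* Summing the three costs, the smallest one is at most 5/3 OPT; the advice
   bits select an algorithm of smallest cost. *)
Theorem theorem3 (T : eqType) (L sigma : seq T) :
  uniq L -> all (fun x => x \in L) sigma ->
  (forall S : sched,
     3 * minn (TS L sigma) (minn (MTFO L sigma) (MTFE L sigma))
       <= 5 * offline_cost L sigma S) /\
  (forall S : sched,
     3 * run (alg_of_advice (advice L sigma)) [::] L sigma
       <= 5 * offline_cost L sigma S).
Proof.
move=> uL sigmaL.
have min_bound S : 3 * minn (TS L sigma) (minn (MTFO L sigma) (MTFE L sigma))
                   <= 5 * offline_cost L sigma S.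
  have := @amortized_bound T L sigma uL sigmaL [::] L L L L S (perm_refl L) (perm_refl L)
    (perm_refl L) (perm_refl L) (@ts_inv_nil T L).
  rewrite Phi_init addn0 -/(TS L sigma) -/(MTFO L sigma) -/(MTFE L sigma).
  by move: (TS L sigma) (MTFO L sigma) (MTFE L sigma) (offline_cost L sigma S) => *; lia.
split=> // S; apply: leq_trans (min_bound S); rewrite leq_mul2l /=.
set m := minn _ _; rewrite /advice.
case: ifP => [le_TS | /negbT lt_TS].
  by change (TS L sigma <= m); rewrite leq_min leqnn.
case: ifP => [le_OE | /negbT lt_OE].
  by change (MTFO L sigma <= m); move: lt_TS le_OE; rewrite /m; lia.
by change (MTFE L sigma <= m); move: lt_TS lt_OE; rewrite /m; lia.
Qed.
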